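(* Let $n,\lambda,\mu$ be positive integers with $\mu>\lambda$, and let $\mathcal{A}$ be a path decomposition of $\lambda K_n$. Then $\lambda K_n$ is $1$-extendible with respect to $(\mathcal{A},\mu K_n)$ if and only if $|\mathcal{S}_0(\mathcal{A})|\le(\mu-\lambda)\frac{n(n-1)}{2}$. Moreover, if $\mathcal{A}$ is strong and this inequality holds, then $\lambda K_n$ is strongly $1$-extendible with respect to $(\mathcal{A},\mu K_n)$.
   Context: Graphs may have multiple edges. $\lambda K_n$ is the loopless multigraph on $n$ vertices with every pair of distinct vertices joined by exactly $\lambda$ edges; $\lambda K_n$ is regarded as a subgraph of $\mu K_n$ on the same vertex set, and $\mu K_n\setminus\lambda K_n$ denotes the graph obtained by deleting the edges of $\lambda K_n$. A decomposition of size $k$ of a graph $G$ is an ordered $k$-tuple $(G(1),\dots,G(k))$ of spanning subgraphs of $G$ (colour classes; possibly edgeless) with pairwise disjoint edge sets whose union is $E(G)$. A path decomposition is one in which every colour class is a vertex-disjoint union of paths and cycles (two parallel edges form a cycle of length 2); it is strong if no colour class contains a cycle. $\mathcal{S}_i(\mathcal{A})$ is the set of colour classes of $\mathcal{A}$ with exactly $i$ edges. For a graph $G\subseteq H$, a path decomposition $\mathcal{A}$ of $G$ with $k$ colour classes and a positive integer $\alpha$, $G$ is $\alpha$-extendible with respect to $(\mathcal{A},H)$ if there is a graph $F\subseteq H\setminus G$ and a path decomposition $\mathcal{A}^*$ of $G\cup F$ of size $k$ whose restriction to $G$ is $\mathcal{A}$ (i.e. $\mathcal{A}^*(i)\cap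 E(G)=\mathcal{A}(i)$ for all $i$) and each $\mathcal{A}^*(i)$ has at least $\alpha$ edges; it is strongly $\alpha$-extendible if moreover $\mathcal{A}$ and $\mathcal{A}^*$ are strong path decompositions. *)

From mathcomp Require Import all_boot.
Set Implicit Arguments. Unset Strict Implicit. Unset Printing Implicit Defensive.

(* Edges of mu K_n on vertex set 'I_n: an edge is (u, v, j) with u < v and
   j < m a label distinguishing the m parallel edges between u and v. *)
Definition Edge (n m : nat) := {e : 'I_n * 'I_n * 'I_m | e.1.1 < e.1.2}.

Section Graphs.
Variables n m : nat.
Local Notation V := 'I_n.
Local Notation E := (Edge n m).

(* lambda K_n as the subgraph of mu K_n (= [set: E] with m = mu)
   consisting of the parallel edges with label < l. *)
Definition lamK (l : nat) : {set E} := [set e : E | (val e).2 < l].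

Definition joins (e : E) (x y : V) : bool :=
  (((val e).1.1 == x) && ((val e).1.2 == y)) ||
  (((val e).1.1 == y) && ((val e).1.2 == x)).

Definition is_path (vs : seq V) (es : seq E) : bool :=
  [&& uniq vs, uniq es, size vs == (size es).+1 &
      all (fun p => joins p.1 p.2.1 p.2.2) (zip es (zip vs (behead vs)))].

(* a cycle (length >= 2; two parallel edges form a cycle of length 2) *)
Definition is_cycle (vs : seq V) (es : seq E) : bool :=
  [&& uniq vs, uniq es, size vs == size es, 2 <= size es &
      all (fun p => joins p.1 p.2.1 p.2.2) (zip es (zip vs (rot 1 vs)))].

Definition path_or_cycle (p : seq V * seq E) : bool :=
  is_path p.1 p.2 || is_cycle p.1 p.2.

(* F is a vertex-disjoint union of paths and cycles
   (isolated vertices are trivial paths and need not be listed) *)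
Definition union_paths_cycles (F : {set E}) : Prop :=
  exists ps : seq (seq V * seq E),
    [/\ perm_eq (flatten (map snd ps)) (enum F),
        all path_or_cycle ps &
        uniq (flatten (map fst ps))].

Definition contains_cycle (F : {set E}) : Prop :=
  exists (vs : seq V) (es : seq E), is_cycle vs es /\ all (fun e => e \in F) es.

Definition is_decomposition (k : nat) (G : {set E}) (A : 'I_k -> {set E}) : Prop :=
  (forall i j : 'I_k, i != j -> [disjoint A i & A j]) /\
  \bigcup_(i < k) A i = G.

Definition path_decomposition (k : nat) (G : {set E}) (A : 'I_k -> {set E}) : Prop :=
  is_decomposition G A /\ forall i, union_paths_cycles (A i).

Definition strong_path_decomposition (k : nat) (G : {set E}) (A : 'I_k -> {set E}) : Prop :=
  path_decomposition G A /\ forall i, ~ contains_cycle (A i).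

Definition S0 (k : nat) (A : 'I_k -> {set E}) : nat := #|[set i : 'I_k | A i == set0]|.

Definition extendible (alpha k : nat) (G H : {set E}) (A : 'I_k -> {set E}) : Prop :=
  exists F : {set E}, F \subset H :\: G /\
    exists A' : 'I_k -> {set E},
      [/\ path_decomposition (G :|: F) A',
          forall i, A' i :&: G = A i &
          forall i, alpha <= #|A' i|].

Definition strongly_extendible (alpha k : nat) (G H : {set E}) (A : 'I_k -> {set E}) : Prop :=
  strong_path_decomposition G A /\
  exists F : {set E}, F \subset H :\: G /\
    exists A' : 'I_k -> {set E},
      [/\ strong_path_decomposition (G :|: F) A',
          forall i, A' i :&: G = A i &
          forall i, alpha <= #|A' i|].
End Graphs.

From mathcomp Require Import all_boot zify.

Set Implicit Arguments.
Unset Strict Implicit.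
Unset Printing Implicit Defensive.

(* Every colour class of an extension A* must be nonempty, and the edgeless
   classes of A can only receive edges of mu K_n outside lambda K_n; picking
   one such edge per edgeless class gives an injection into those edges, so
   |S_0(A)| <= (mu - lambda) n (n - 1) / 2. Conversely, when the inequality
   holds, giving each edgeless class a single distinct new edge is an
   extension, and a single edge is a path that contains no cycle. *)

Lemma card_ord_geq (m a : nat) : #|[set j : 'I_m | a <= j]| = m - a.
Proof.
rewrite -sum1_card big_mkcond /=; under eq_bigr do rewrite inE.
elim: m => [|m IHm]; first by rewrite big_ord0.
by rewrite big_ord_recr /= IHm; case: leqP; lia.
Qed.

Lemma card_ord_ltn_pairs (n : nat) :
  #|[set p : 'I_n * 'I_n | p.1 < p.2]| = 'C(n, 2).
Proof.
rewrite -sum1_card big_mkcond /=; under eq_bigr do rewrite inE.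
rewrite -(pair_big xpredT xpredT (fun u v : 'I_n => if u < v then 1 else 0)) /=.
have row (u : 'I_n) : \sum_(j < n) (if u < j then 1 else 0) = n - u.+1.
  rewrite -card_ord_geq -sum1_card [RHS]big_mkcond.
  by apply: eq_bigr => v _; rewrite inE.
under eq_bigr do rewrite row.
elim: n {row} => [|n IHn]; first by rewrite big_ord0.
by rewrite big_ord_recl /= binS bin1 -IHn subn1 addnC.
Qed.

Lemma card_lamKC (n mu lam : nat) :
  #|~: lamK n mu lam| = (mu - lam) * 'C(n, 2).
Proof.
rewrite -(card_imset _ val_inj) mulnC -card_ord_ltn_pairs -card_ord_geq -cardsX.
apply: eq_card => x; rewrite !inE /=; apply/imsetP/andP.
- case=> e; rewrite !inE -leqNgt => he ->; split=> //; exact: (valP e).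
- case=> lt_p le_lam; exists (exist _ x lt_p) => //.
  by rewrite !inE /= -leqNgt.
Qed.

Lemma exists_inj_in (T U : finType) (A : {set T}) (B : {set U}) (u0 : U) :
  #|A| <= #|B| ->
  exists2 f : T -> U, {in A &, injective f} & forall x, x \in A -> f x \in B.
Proof.
move=> le_AB; pose f x := nth u0 (enum B) (index x (enum A)).
have idx_lt x : x \in A -> index x (enum A) < size (enum B).
  by move=> Ax; rewrite -cardE (leq_trans _ le_AB) // cardE index_mem mem_enum.
exists f => [x y Ax Ay /eqP|x Ax]; last by rewrite -mem_enum mem_nth ?idx_lt.
rewrite nth_uniq ?idx_lt ?enum_uniq // => /eqP eq_idx.
by rewrite -(nth_index x (_ : x \in enum A)) ?eq_idx ?nth_index ?mem_enum.
Qed.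

Section SingleEdge.
Variables n m : nat.

Lemma union_paths_cycles_set1 (e : Edge n m) : union_paths_cycles [set e].
Proof.
have ne_ends : (val e).1.1 != (val e).1.2.
  by apply: contraTneq (valP e) => ->; rewrite ltnn.
exists [:: ([:: (val e).1.1; (val e).1.2], [:: e])]; split => /=.
- by rewrite enum_set1.
- by rewrite /path_or_cycle /is_path /= inE ne_ends /joins !eqxx.
- by rewrite inE ne_ends.
Qed.

Lemma contains_cycle_set1 (e : Edge n m) : ~ contains_cycle [set e].
Proof.
case=> vs [[|a [|b es]] [/and5P [_ uniq_es _ _ _]]] //= /and3P [].
rewrite !inE => /eqP a_e /eqP b_e _.
by move: uniq_es; rewrite a_e b_e /= inE eqxx.
Qed.

End SingleEdge.

Section Extension.
Variables n m k : nat.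
Variables (G : {set Edge n m}) (A : 'I_k -> {set Edge n m}).
Hypothesis decA : is_decomposition G A.

Local Notation S0set := [set i : 'I_k | A i == set0].

Lemma empty_classes_le_extension (F : {set Edge n m}) A' :
  is_decomposition (G :|: F) A' -> (forall i, A' i :&: G = A i) ->
  (forall i, 0 < #|A' i|) -> S0 A <= #|F|.
Proof.
move=> [disjA' covA'] restrA' nonemptyA'; rewrite /S0.
pose pick_edge i := [pick e in A' i].
have pick_edgeP i : exists2 e, pick_edge i = Some e & e \in A' i.
  rewrite /pick_edge; case: pickP => [e|none_in]; first by exists e.
  have := nonemptyA' i; rewrite card_gt0 => /set0Pn [e].
  by rewrite none_in.
rewrite -(card_in_imset (f := pick_edge)); last first.
  move=> i j _ _ eq_pick; have [e pick_i ei] := pick_edgeP i.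
  have [e' pick_j ej] := pick_edgeP j; move: eq_pick; rewrite pick_i pick_j.
  case=> eq_e; subst e'; apply/eqP; apply: contraT => /disjA'.
  by move/disjointFr/(_ ei); rewrite ej.
rewrite -(card_imset F Some_inj); apply/subset_leq_card/subsetP => o /imsetP [i].
rewrite inE => /eqP Ai0 ->; have [e -> ei] := pick_edgeP i; rewrite imset_f //.
have : e \in G :|: F by rewrite -covA'; apply/bigcupP; exists i.
case/setUP=> // eG; have : e \in A' i :&: G by rewrite inE ei.
by rewrite restrA' Ai0 inE.
Qed.

Lemma singleton_extension :
  S0 A <= #|~: G| ->
  exists2 F : {set Edge n m}, F \subset ~: G &
    exists A' : 'I_k -> {set Edge n m},
      [/\ is_decomposition (G :|: F) A', forall i, A' i :&: G = A i,
          forall i, 0 < #|A' i| &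
          forall i, A' i = A i \/ exists e, A' i = [set e]].
Proof.
rewrite /S0; have [disjA covA] := decA.
have subA i : A i \subset G by rewrite -covA (bigcup_sup i).
case: (set_0Vmem (~: G)) => [GC0 | [e0 _]] le_S0.
  move: le_S0; rewrite GC0 cards0 leqn0 cards_eq0 => /eqP S0_empty.
  exists set0; first exact: sub0set.
  exists A; split=> [||i|i]; last by left.
  - by rewrite setU0.
  - by move=> i; apply/setIidPl.
  - have : i \notin S0set by rewrite S0_empty inE.
    by rewrite inE card_gt0.
have [h inj_h h_inC] := exists_inj_in e0 le_S0.
have h_notinG i : i \in S0set -> h i \notin G by move/h_inC; rewrite inE.
exists (h @: S0set); first by apply/subsetP => o /imsetP [i /h_inC ? ->].
exists (fun i => if i \in S0set then [set h i] else A i); split.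
- split=> [i j ne_ij|].
    case: ifP => Si; case: ifP => Sj.
    + rewrite disjoints1 inE; apply: contra ne_ij => /eqP/inj_h -> //.
    + by rewrite disjoints1; apply: contra (h_notinG i Si); apply/subsetP.
    + rewrite disjoint_sym disjoints1.
      by apply: contra (h_notinG j Sj); apply/subsetP.
    + exact: disjA.
  apply/setP => e; apply/bigcupP/setUP => [[i _]|[eG|/imsetP [i Si ->]]].
  + case: ifP => Si; first by rewrite inE => /eqP ->; right; apply: imset_f.
    by left; apply: (subsetP (subA i)).
  + move: eG; rewrite -covA => /bigcupP [i _ ei]; exists i => //.
    by case: ifP => //; rewrite inE => /eqP Ai0; rewrite Ai0 inE in ei.
  + by exists i; rewrite ?Si ?inE.
- move=> i; case: ifP => Si; last exact/setIidPl.
  move: (Si); rewrite inE => /eqP ->.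
  by apply/eqP; rewrite setI_eq0 disjoints1 h_notinG.
- by move=> i; case: ifP; rewrite ?cards1 // inE card_gt0 => ->.
- by move=> i; case: ifP; [right; exists (h i) | left].
Qed.

End Extension.

Theorem proposition1 (n lam mu k : nat) (A : 'I_k -> {set Edge n mu}) :
  0 < n -> 0 < lam -> lam < mu ->
  path_decomposition (lamK n mu lam) A ->
  (extendible 1 (lamK n mu lam) [set: Edge n mu] A <->
     S0 A <= (mu - lam) * (n * (n - 1) %/ 2)) /\
  (strong_path_decomposition (lamK n mu lam) A ->
     S0 A <= (mu - lam) * (n * (n - 1) %/ 2) ->
     strongly_extendible 1 (lamK n mu lam) [set: Edge n mu] A).
Proof.
move=> _ _ _ [decA pathsA].
have -> : n * (n - 1) %/ 2 = 'C(n, 2) by rewrite bin2 divn2 subn1.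
rewrite -card_lamKC /extendible /strongly_extendible setTD.
have paths_ext A' : (forall i, A' i = A i \/ exists e, A' i = [set e]) ->
    forall i, union_paths_cycles (A' i).
  move=> A'P i; case: (A'P i) => [->|[e ->]] //.
  exact: union_paths_cycles_set1.
split; [split|].
- case=> F [subF [A' [[decA' _] restrA' nonemptyA']]].
  exact: leq_trans (empty_classes_le_extension decA' restrA' nonemptyA')
                   (subset_leq_card subF).
- case/(singleton_extension decA) => F subF [A' [decA' restrA' nonemptyA' A'P]].
  by exists F; split=> //; exists A'; split=> //; split=> //; apply: paths_ext.
- move=> [_ acyclicA] /(singleton_extension decA).
  move=> [F subF [A' [decA' restrA' nonemptyA' A'P]]].
  split=> //; exists F; split=> //; exists A'; split=> //.
  split; first by split=> //; apply: paths_ext.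
  by move=> i; case: (A'P i) => [->|[e ->]]; last exact: contains_cycle_set1.
Qed.
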